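(* Let $d\ge 1$ and $L\ge 1$ be integers and let $\Phi\in\mathbb{R}^{d\times d}$ be arbitrary. Consider the loss $$\mathcal{R}(W_1,\dots,W_L)=\tfrac12\|W_LW_{L-1}\cdots W_1-\Phi\|_F^2,\qquad W_l\in\mathbb{R}^{d\times d},$$ and the continuous-time gradient descent (gradient flow) $$\dot W_l(t)=-\nabla_l\mathcal{R}(t),\qquad l=1,\dots,L,\ t\ge 0,$$ started from the zero-asymmetric initialization $W_l(0)=I$ for $l=1,\dots,L-1$ and $W_L(0)=0$. Then $$\mathcal{R}(t)\le e^{-2t}\mathcal{R}(0)\qquad\text{for all } t\ge 0.$$
   Context: For $l_2\ge l_1$ write $W_{l_2:l_1}=W_{l_2}W_{l_2-1}\cdots W_{l_1}$, and an empty product (e.g. $W_{0:1}$ or $W_{L:L+1}$) is the identity matrix $I\in\mathbb{R}^{d\times d}$. The gradient of $\mathcal{R}$ with respect to $W_l$ is $\nabla_l\mathcal{R}=W_{L:l+1}^\intercal(W_{L:1}-\Phi)W_{l-1:1}^\intercal$. $\mathcal{R}(t)$ denotes $\mathcal{R}(W_1(t),\dots,W_L(t))$ and $\nabla_l\mathcal{R}(t)$ the gradient evaluated at $(W_1(t),\dots,W_L(t))$. $\|\cdot\|_F$ is the Frobenius norm. *)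

From HB Require Import structures.
From mathcomp Require Import all_boot all_order all_algebra.
From mathcomp Require Import all_classical all_reals all_analysis.
Set Implicit Arguments. Unset Strict Implicit. Unset Printing Implicit Defensive.
Import Order.TTheory GRing.Theory Num.Theory.
Import numFieldNormedType.Exports.
Local Open Scope ring_scope.

(* Layers are indexed by natural numbers; only indices 1..L are used. *)

(* W_{l2:l1} = W_{l2} W_{l2-1} ... W_{l1}; identity when l2 < l1. *)
Definition Wprod (R : realType) (d : nat) (W : nat -> 'M[R]_d) (l2 l1 : nat)
  : 'M[R]_d :=
  \big[mulmx/1%:M]_(k <- rev (iota l1 (l2.+1 - l1))) W k.

Definition loss (R : realType) (d L : nat) (Phi : 'M[R]_d) (W : nat -> 'M[R]_d)
  : R :=
  2^-1 * \sum_(i < d) \sum_(j < d) ((Wprod W L 1 - Phi) i j) ^+ 2.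

Definition grad (R : realType) (d L : nat) (Phi : 'M[R]_d) (W : nat -> 'M[R]_d)
  (l : nat) : 'M[R]_d :=
  (Wprod W L l.+1)^T *m (Wprod W L 1 - Phi) *m (Wprod W l.-1 1)^T.

From HB Require Import structures.
From mathcomp Require Import all_boot all_order all_algebra.
From mathcomp Require Import all_classical all_reals all_analysis.
From mathcomp Require Import lra.
Import Order.TTheory GRing.Theory Num.Theory.
Import numFieldNormedType.Exports.
Local Open Scope classical_set_scope.
Local Open Scope ring_scope.
Set Implicit Arguments. Unset Strict Implicit. Unset Printing Implicit Defensive.

(* The flow conserves the defects [W_{k+1}^T W_{k+1} - W_k W_k^T], because
   [W_{k+1}^T grad_{k+1} = grad_k W_k^T].  At the zero-asymmetric initialization
   they vanish for [k < L-1] and equal [-1] for [k = L-1]; going down from the top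
   layer this gives [W_k W_k^T >= 1], hence [W_k^T W_k >= 1], for every [k < L],
   so [P := W_{L-1:1}] satisfies [P^T P >= 1].  Along the flow
   [R' = - sum_l |grad_l|^2 <= - |grad_L|^2 = - |(W_{L:1} - Phi) P^T|^2
       <= - |W_{L:1} - Phi|^2 = - 2 R],
   and Gronwall's inequality concludes. *)

Definition mxdot {R : pzRingType} {m n} (A B : 'M[R]_(m, n)) : R := \tr (A^T *m B).

Section FrobeniusProduct.
Context {R : realFieldType}.

Section Shape.
Context {m n : nat}.
Implicit Types A B C : 'M[R]_(m, n).

Lemma mxdotE A B : mxdot A B = \sum_i \sum_j A i j * B i j.
Proof.
rewrite /mxdot /mxtrace exchange_big /=; apply: eq_bigr => j _.
by rewrite mxE; apply: eq_bigr => i _; rewrite mxE.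
Qed.

Lemma mxdotC A B : mxdot A B = mxdot B A.
Proof. by rewrite /mxdot -mxtrace_tr trmx_mul trmxK. Qed.

Lemma mxdotDr A B C : mxdot A (B + C) = mxdot A B + mxdot A C.
Proof. by rewrite /mxdot mulmxDr mxtraceD. Qed.

Lemma mxdotNr A B : mxdot A (- B) = - mxdot A B.
Proof. by rewrite /mxdot mulmxN; exact: raddfN. Qed.

Lemma mxdot_sumr k A (B : 'I_k -> 'M[R]_(m, n)) :
  mxdot A (\sum_(l < k) B l) = \sum_(l < k) mxdot A (B l).
Proof. by rewrite /mxdot mulmx_sumr; exact: raddf_sum. Qed.

Lemma mxdot_ge0 A : 0 <= mxdot A A.
Proof.
rewrite mxdotE; apply: sumr_ge0 => i _; apply: sumr_ge0 => j _.
by rewrite -expr2 sqr_ge0.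
Qed.

Lemma mxdot_eq0 A : mxdot A A = 0 -> A = 0.
Proof.
have sq_ge0 (a : R) : 0 <= a * a by rewrite -expr2 sqr_ge0.
have row_ge0 i : 0 <= \sum_j A i j * A i j by apply: sumr_ge0.
rewrite mxdotE => /psumr_eq0P-/(_ (fun i _ => row_ge0 i)) A0.
apply/matrixP => i j; rewrite mxE.
have /psumr_eq0P-/(_ (fun k _ => sq_ge0 _) j isT)/eqP := A0 i isT.
by rewrite mulf_eq0 orbb => /eqP.
Qed.

Lemma mxdot_le_add A B : 2 * mxdot A B <= mxdot A A + mxdot B B.
Proof.
rewrite !mxdotE -big_split /= mulr_sumr; apply: ler_sum => i _.
rewrite -big_split /= mulr_sumr; apply: ler_sum => j _.
by have := sqr_ge0 (A i j - B i j); rewrite sqrrB; lra.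
Qed.

End Shape.

Lemma mxdot_rows m n (A : 'M[R]_(m, n)) :
  mxdot A A = \sum_i mxdot (row i A) (row i A).
Proof.
rewrite mxdotE; apply: eq_bigr => i _; rewrite mxdotE big_ord1.
by apply: eq_bigr => j _; rewrite !mxE.
Qed.

Lemma mxdot_mulmxl m n p (X : 'M[R]_(m, p)) (A : 'M[R]_(m, n)) (Y : 'M[R]_(n, p)) :
  mxdot X (A *m Y) = mxdot (A^T *m X) Y.
Proof. by rewrite /mxdot trmx_mul trmxK mulmxA. Qed.

Lemma mxdot_mulmxr m n p (X : 'M[R]_(m, p)) (Y : 'M[R]_(m, n)) (B : 'M[R]_(n, p)) :
  mxdot X (Y *m B) = mxdot (X *m B^T) Y.
Proof. by rewrite /mxdot trmx_mul trmxK mulmxA mxtrace_mulC !mulmxA. Qed.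

Lemma mxdot_mulmx_gram m n (u : 'M[R]_(m, n)) (M : 'M[R]_n) :
  mxdot (u *m M) (u *m M) = mxdot u (u *m (M *m M^T)).
Proof. by rewrite mulmxA mxdot_mulmxr mxdotC. Qed.

(* [expanding M] means [M M^T >= 1] in the Loewner order. *)
Definition expanding {n} (M : 'M[R]_n) :=
  forall u : 'rV[R]_n, mxdot u u <= mxdot (u *m M) (u *m M).

Lemma expanding1 n : expanding (1%:M : 'M[R]_n).
Proof. by move=> u; rewrite mulmx1. Qed.

Lemma expanding_mul n (M N : 'M[R]_n) :
  expanding M -> expanding N -> expanding (M *m N).
Proof. by move=> eM eN u; rewrite mulmxA; apply: le_trans (eM u) (eN _). Qed.

Lemma expanding_unitmx n (M : 'M[R]_n) : expanding M -> M \in unitmx.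
Proof.
move=> eM; rewrite -row_free_unit -kermx_eq0; apply/eqP/row_matrixP => i.
rewrite row0; apply: mxdot_eq0; apply/le_anti; rewrite mxdot_ge0 andbT.
by apply: le_trans (eM _) _; rewrite -row_mul mulmx_ker row0 /mxdot mulmx0 mxtrace0.
Qed.

(* [M^-1] is a contraction, hence so is its adjoint [M^-T]. *)
Lemma expanding_tr n (M : 'M[R]_n) : expanding M -> expanding M^T.
Proof.
move=> eM; have VM : invmx M *m M = 1%:M by apply/mulVmx/expanding_unitmx.
have contrV (v : 'rV_n) : mxdot (v *m invmx M) (v *m invmx M) <= mxdot v v.
  by apply: le_trans (eM _) _; rewrite -mulmxA VM mulmx1.
have contrVT (v : 'rV_n) : mxdot (v *m (invmx M)^T) (v *m (invmx M)^T) <= mxdot v v.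
  have [w wE] : exists w, w = v *m (invmx M)^T by eexists.
  have ww : mxdot w w = mxdot v (w *m invmx M) by rewrite mxdot_mulmxr -wE.
  rewrite -wE; have := mxdot_le_add v (w *m invmx M); have := contrV w; lra.
move=> u; rewrite -[u in mxdot u u](mulmx1 u) -trmx1 -VM trmx_mul mulmxA.
exact: contrVT.
Qed.

Lemma expanding_gram_addI n (M N : 'M[R]_n) :
  M *m M^T = N^T *m N + 1%:M -> expanding M.
Proof.
move=> gM u; rewrite mxdot_mulmx_gram gM mulmxDr mulmx1 mxdotDr -{2}(trmxK N).
by rewrite -mxdot_mulmx_gram lerDr mxdot_ge0.
Qed.

Lemma expanding_gram_eq n (M N : 'M[R]_n) :
  M *m M^T = N^T *m N -> expanding N^T -> expanding M.
Proof.
move=> gM eN u; rewrite mxdot_mulmx_gram gM -{2}(trmxK N).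
by rewrite -mxdot_mulmx_gram; exact: eN.
Qed.

Lemma mxdot_expanding m n (A : 'M[R]_(m, n)) (M : 'M[R]_n) :
  expanding M -> mxdot A A <= mxdot (A *m M) (A *m M).
Proof.
by move=> eM; rewrite !mxdot_rows; apply: ler_sum => i _; rewrite row_mul.
Qed.

End FrobeniusProduct.

Section RightDerivative.
Context {R : realType}.
Implicit Types (f df : R -> R) (c s t : R).

Lemma le_at0_of_derive_le0 f df :
  (forall t, 0 < t -> is_derive t 1 f (df t)) -> (forall t, 0 < t -> df t <= 0) ->
  f x @[x --> 0^'+] --> f 0 -> forall t, 0 <= t -> f t <= f 0.
Proof.
move=> f' df_le0 f0 t; rewrite le_eqVlt => /predU1P[<- //|t_gt0].
have le_ft s : 0 < s <= t -> f t <= f s.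
  case/andP=> s_gt0 st; apply: (@ler0_derive1_le_oo R f 0 (t + 1)) => //.
  - by move=> x; rewrite in_itv /= => /andP[/f' []].
  - by move=> x; rewrite in_itv /= derive1E => /andP[/[dup] /f' [_ ->] /df_le0].
  - move=> x /set_mem; rewrite /= in_itv /= => /andP[/f' [dfx _] _].
    exact/differentiable_continuous/derivable1_diffP.
  - by rewrite in_itv /= t_gt0 ltrDl ltr01.
  - by rewrite in_itv /= s_gt0 (le_lt_trans st) // ltrDl ltr01.
apply: (ler_cvg_to (cvg_cst (f t)) f0); near=> s; apply: le_ft.
apply/andP; split; near: s; [exact: nbhs_right_gt | exact: nbhs_right_le].
Unshelve. all: end_near.
Qed.

Lemma eq_at0_of_derive0 f :
  (forall t, 0 < t -> is_derive t 1 f 0) -> f x @[x --> 0^'+] --> f 0 ->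
  forall t, 0 <= t -> f t = f 0.
Proof.
move=> f' f0 t t_ge0; apply/le_anti/andP; split.
  exact: (@le_at0_of_derive_le0 f (fun=> 0)).
rewrite -lerN2; apply: (@le_at0_of_derive_le0 (fun x => - f x) (fun=> 0)) => //.
- by move=> s /f' f's; rewrite -oppr0; exact: is_deriveN.
- exact: cvgN.
Qed.

Lemma exp_decay_of_derive c f df :
  (forall t, 0 < t -> is_derive t 1 f (df t)) ->
  (forall t, 0 < t -> df t <= - c * f t) ->
  f x @[x --> 0^'+] --> f 0 ->
  forall t, 0 <= t -> f t <= expR (- c * t) * f 0.
Proof.
move=> f' df_le f0 t t_ge0.
have e' s : is_derive s 1 (fun x => expR (c * x)) (expR (c * s) * c).
  apply: is_derive1_comp.
  by rewrite -[X in is_derive _ _ _ X]mulr1; exact: is_deriveZ.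
pose g x := expR (c * x) * f x.
pose dg s := expR (c * s) * df s + f s * (expR (c * s) * c).
have g' s : 0 < s -> is_derive s 1 g (dg s).
  by move=> /f' fs'; exact: is_deriveM (e' s) fs'.
have g_le : g t <= g 0.
  apply: (le_at0_of_derive_le0 g') => // [s s_gt0|].
    rewrite /dg mulrCA -mulrDr pmulr_rle0 ?expR_gt0 //.
    by rewrite -lerBrDr sub0r mulrC -mulNr df_le.
  apply: cvgM => //; apply: cvg_at_right_filter; have [e'0 _] := e' 0.
  exact: differentiable_continuous (iffLR (derivable1_diffP _ _) e'0).
rewrite /g mulr0 expR0 mul1r in g_le.
rewrite mulNr -[f t]mul1r -(expRxMexpNx_1 (c * t)) [expR _ * _]mulrC -mulrA.
by rewrite ler_wpM2l ?expR_ge0.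
Qed.
End RightDerivative.

Section MatrixCalculus.
Context {R : realType}.
Implicit Types t : R.

Lemma is_derive_sum_pointwise n (f : 'I_n -> R -> R) (df : 'I_n -> R) t :
  (forall k, is_derive t 1 (f k) (df k)) ->
  is_derive t 1 (fun s => \sum_k f k s) (\sum_k df k).
Proof. by rewrite -fct_sumE; exact: is_derive_sum. Qed.

Lemma cvg_sum_pointwise {T : Type} (F : set_system T) {FF : Filter F} n
    (f : 'I_n -> T -> R) (a : 'I_n -> R) :
  (forall k, f k x @[x --> F] --> a k) -> (\sum_k f k x) @[x --> F] --> \sum_k a k.
Proof.
by move=> fa; exact: (@cvg_big _ _ +%R 0 xpredT add_continuous _ F _ f a FF).
Qed.

Definition is_mxderive {m n} t (M : R -> 'M[R]_(m, n)) (M' : 'M[R]_(m, n)) :=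
  forall i j, is_derive t 1 (fun s => M s i j) (M' i j).

Definition mx_right_cont0 {m n} (M : R -> 'M[R]_(m, n)) :=
  forall i j, M x i j @[x --> 0^'+] --> M 0 i j.

Section Shape.
Context {m n : nat}.
Implicit Types (M N : R -> 'M[R]_(m, n)) (A B C : 'M[R]_(m, n)).

Lemma is_mxderive_cst t C : is_mxderive t (fun=> C) 0.
Proof. by move=> i j; rewrite mxE; exact: is_derive_cst. Qed.

Lemma is_mxderiveD t M N A B : is_mxderive t M A -> is_mxderive t N B ->
  is_mxderive t (fun s => M s + N s) (A + B).
Proof.
by move=> dM dN i j; under eq_fun do rewrite mxE; rewrite mxE; exact: is_deriveD.
Qed.

Lemma is_mxderiveN t M A : is_mxderive t M A ->
  is_mxderive t (fun s => - M s) (- A).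
Proof.
by move=> dM i j; under eq_fun do rewrite mxE; rewrite mxE; exact: is_deriveN.
Qed.

Lemma is_mxderive_tr t M A : is_mxderive t M A ->
  is_mxderive t (fun s => (M s)^T) A^T.
Proof. by move=> dM i j; under eq_fun do rewrite mxE; rewrite mxE; exact: dM. Qed.

Lemma mx_right_cont0_cst C : mx_right_cont0 (fun=> C).
Proof. by move=> i j; exact: cvg_cst. Qed.

Lemma mx_right_cont0D M N : mx_right_cont0 M -> mx_right_cont0 N ->
  mx_right_cont0 (fun s => M s + N s).
Proof.
by move=> cM cN i j; under eq_fun do rewrite mxE; rewrite mxE; exact: cvgD.
Qed.

Lemma mx_right_cont0N M : mx_right_cont0 M -> mx_right_cont0 (fun s => - M s).
Proof. by move=> cM i j; under eq_fun do rewrite mxE; rewrite mxE; exact: cvgN. Qed.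

Lemma mx_right_cont0_tr M : mx_right_cont0 M -> mx_right_cont0 (fun s => (M s)^T).
Proof. by move=> cM i j; under eq_fun do rewrite mxE; rewrite mxE; exact: cM. Qed.

Lemma is_derive_mxdot t M N A B : is_mxderive t M A -> is_mxderive t N B ->
  is_derive t 1 (fun s => mxdot (M s) (N s)) (mxdot A (N t) + mxdot (M t) B).
Proof.
move=> dM dN; under eq_fun do rewrite mxdotE.
rewrite !mxdotE -big_split /=; under eq_bigr do rewrite -big_split /=.
apply: is_derive_sum_pointwise => i; apply: is_derive_sum_pointwise => j.
by rewrite addrC [A i j * _]mulrC; exact: is_deriveM.
Qed.

Lemma mxdot_right_cont0 M N : mx_right_cont0 M -> mx_right_cont0 N ->
  mxdot (M x) (N x) @[x --> 0^'+] --> mxdot (M 0) (N 0).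
Proof.
move=> cM cN; under eq_fun do rewrite mxdotE; rewrite mxdotE.
by apply: cvg_sum_pointwise => i; apply: cvg_sum_pointwise => j; exact: cvgM.
Qed.

End Shape.

Lemma is_mxderiveM {m n p} t (M : R -> 'M[R]_(m, n)) (N : R -> 'M[R]_(n, p)) M' N' :
  is_mxderive t M M' -> is_mxderive t N N' ->
  is_mxderive t (fun s => M s *m N s) (M' *m N t + M t *m N').
Proof.
move=> dM dN i j; under eq_fun do rewrite mxE.
rewrite !mxE -big_split /=; apply: is_derive_sum_pointwise => k.
by rewrite addrC [M' i k * _]mulrC; exact: is_deriveM.
Qed.

Lemma mx_right_cont0M {m n p} (M : R -> 'M[R]_(m, n)) (N : R -> 'M[R]_(n, p)) :
  mx_right_cont0 M -> mx_right_cont0 N -> mx_right_cont0 (fun s => M s *m N s).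
Proof.
move=> cM cN i j; under eq_fun do rewrite mxE; rewrite mxE.
by apply: cvg_sum_pointwise => k; exact: cvgM.
Qed.

End MatrixCalculus.

Section LayerProducts.
Context {R : realType} {d : nat}.
Implicit Types (W : nat -> 'M[R]_d) (Phi : 'M[R]_d).

Lemma big_mulmx_rcons (I : Type) (F : I -> 'M[R]_d) s x :
  \big[mulmx/1%:M]_(k <- rcons s x) F k = (\big[mulmx/1%:M]_(k <- s) F k) *m F x.
Proof.
elim: s => [|y s IHs]; first by rewrite big_cons !big_nil mul1mx mulmx1.
by rewrite rcons_cons !big_cons IHs mulmxA.
Qed.

Lemma Wprod_nil W n m : (n < m)%N -> Wprod W n m = 1%:M.
Proof. by move=> lt_nm; rewrite /Wprod (eqP lt_nm) big_nil. Qed.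

Lemma Wprod_recl W n m : (m <= n.+1)%N -> Wprod W n.+1 m = W n.+1 *m Wprod W n m.
Proof.
move=> le_mn; rewrite /Wprod subSn // -addn1 iotaD rev_cat big_cons.
by rewrite subnKC.
Qed.

Lemma Wprod_recr W n m : (m <= n)%N -> Wprod W n m = Wprod W n m.+1 *m W m.
Proof.
by move=> le_mn; rewrite /Wprod subSS subSn //= rev_cons big_mulmx_rcons.
Qed.

Lemma grad_balance L Phi W k : (0 < k < L)%N ->
  (W k.+1)^T *m grad L Phi W k.+1 = grad L Phi W k *m (W k)^T.
Proof.
case: k => [//|k] /= lt_kL; rewrite /grad /= !mulmxA -trmx_mul -Wprod_recr //.
by rewrite -!mulmxA -trmx_mul -Wprod_recl.
Qed.

Lemma grad_last L Phi W : (0 < L)%N ->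
  grad L Phi W L = (Wprod W L 1 - Phi) *m (Wprod W L.-1 1)^T.
Proof. by move=> L_gt0; rewrite /grad Wprod_nil // trmx1 mul1mx. Qed.

Lemma loss_mxdot L Phi W :
  loss L Phi W = 2^-1 * mxdot (Wprod W L 1 - Phi) (Wprod W L 1 - Phi).
Proof. by rewrite /loss mxdotE; under eq_bigr do under eq_bigr do rewrite expr2. Qed.

Lemma mxdot_residual_grad L Phi W :
  mxdot (Wprod W L 1 - Phi)
        (\sum_(l < L) Wprod W L l.+2 *m grad L Phi W l.+1 *m Wprod W l 1)
  = \sum_(l < L) mxdot (grad L Phi W l.+1) (grad L Phi W l.+1).
Proof.
rewrite mxdot_sumr; apply: eq_bigr => l _.
by rewrite mxdot_mulmxr mxdot_mulmxl mulmxA.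
Qed.

End LayerProducts.

Section LayerProductCalculus.
Context {R : realType} {d : nat}.
Implicit Types (W : nat -> R -> 'M[R]_d) (t : R).

Local Notation Wt W t := (fun k => W k t).

Lemma is_mxderive_Wprod t W (W' : nat -> 'M[R]_d) n :
  (forall l, (0 < l <= n)%N -> is_mxderive t (W l) (W' l)) ->
  is_mxderive t (fun s => Wprod (Wt W s) n 1)
    (\sum_(l < n) Wprod (Wt W t) n l.+2 *m W' l.+1 *m Wprod (Wt W t) l 1).
Proof.
elim: n => [|n IHn] dW.
  rewrite big_ord0; under eq_fun do rewrite Wprod_nil //.
  exact: is_mxderive_cst.
under eq_fun do rewrite Wprod_recl //.
rewrite big_ord_recr /= Wprod_nil // mul1mx addrC.
have -> : \sum_(l < n) Wprod (Wt W t) n.+1 l.+2 *m W' l.+1 *m Wprod (Wt W t) l 1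
    = W n.+1 t *m \sum_(l < n) Wprod (Wt W t) n l.+2 *m W' l.+1 *m Wprod (Wt W t) l 1.
  rewrite mulmx_sumr; apply: eq_bigr => l _.
  by rewrite Wprod_recl ?ltnS ?ltn_ord // !mulmxA.
apply: is_mxderiveM; first by apply: dW; rewrite leqnn.
by apply: IHn => l /andP[l_gt0 le_ln]; apply: dW; rewrite l_gt0 ltnW.
Qed.

Lemma mx_right_cont0_Wprod W n :
  (forall l, (0 < l <= n)%N -> mx_right_cont0 (W l)) ->
  mx_right_cont0 (fun s => Wprod (Wt W s) n 1).
Proof.
elim: n => [|n IHn] cW.
  under eq_fun do rewrite Wprod_nil //; exact: mx_right_cont0_cst.
under eq_fun do rewrite Wprod_recl //.
apply: mx_right_cont0M; first by apply: cW; rewrite leqnn.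
by apply: IHn => l /andP[l_gt0 le_ln]; apply: cW; rewrite l_gt0 ltnW.
Qed.

End LayerProductCalculus.

Section ZeroAsymmetricFlow.
Variables (R : realType) (d L : nat) (Phi : 'M[R]_d) (W : nat -> R -> 'M[R]_d).
Hypothesis L_gt0 : (0 < L)%N.
Hypothesis W_init : forall l, (1 <= l < L)%N -> W l 0 = 1%:M.
Hypothesis WL_init : W L 0 = 0.
Hypothesis W_flow : forall l, (1 <= l <= L)%N -> forall t : R, 0 < t -> forall i j : 'I_d,
  is_derive t 1 (fun s => W l s i j) (- grad L Phi (fun k => W k t) l i j).
Hypothesis W_cont0 : forall l, (1 <= l <= L)%N -> mx_right_cont0 (W l).

Local Notation Wt t := (fun k => W k t).
Local Notation gap k t := ((W k.+1 t)^T *m W k.+1 t - W k t *m (W k t)^T).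

Lemma W_is_mxderive l t : (0 < l <= L)%N -> 0 < t ->
  is_mxderive t (W l) (- grad L Phi (Wt t) l).
Proof. by move=> lL t_gt0 i j; rewrite mxE; exact: W_flow. Qed.

Lemma gap_const k t : (0 < k < L)%N -> 0 <= t -> gap k t = gap k 0.
Proof.
case/andP=> k_gt0 kL t_ge0.
have Lk1 : (0 < k.+1 <= L)%N by [].
have Lk : (0 < k <= L)%N by rewrite k_gt0 ltnW.
have gap' s : 0 < s -> is_mxderive s (fun x => gap k x) 0.
  move=> s_gt0; have dWk1 := W_is_mxderive Lk1 s_gt0.
  have dWk := W_is_mxderive Lk s_gt0.
  have := is_mxderiveD (is_mxderiveM (is_mxderive_tr dWk1) dWk1)
    (is_mxderiveN (is_mxderiveM dWk (is_mxderive_tr dWk))).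
  set g1 := grad L Phi (Wt s) k.+1; set g0 := grad L Phi (Wt s) k.
  have bal : (W k.+1 s)^T *m g1 = g0 *m (W k s)^T by rewrite grad_balance ?k_gt0.
  have balT : g1^T *m W k.+1 s = W k s *m g0^T.
    by rewrite -[LHS]trmxK trmx_mul trmxK bal trmx_mul trmxK.
  by rewrite !linearN /= !mulNmx balT bal [- (g0 *m _) - _]addrC subrr.
have gap0 : mx_right_cont0 (fun s => gap k s).
  have cWk1 := W_cont0 Lk1; have cWk := W_cont0 Lk.
  exact: mx_right_cont0D (mx_right_cont0M (mx_right_cont0_tr cWk1) cWk1)
    (mx_right_cont0N (mx_right_cont0M cWk (mx_right_cont0_tr cWk))).
apply/matrixP => i j; apply: (eq_at0_of_derive0 (f := fun s => gap k s i j)) => //.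
by move=> s /gap' /(_ i j); rewrite mxE.
Qed.

Lemma expanding_trW k t : (0 < k < L)%N -> 0 <= t -> expanding (W k t)^T.
Proof.
move=> /andP[k_gt0 kL] t_ge0.
have [j jE] : exists j, L = (k + j.+1)%N by exists (L - k.+1)%N; rewrite -addSnnS subnKC.
elim: j k jE k_gt0 kL => [|j IHj] k jE k_gt0 kL; apply: expanding_tr;
  have := gap_const (k := k) _ t_ge0; rewrite k_gt0 kL => /(_ isT).
- have Wk1_0 : W k.+1 0 = 0 by rewrite -[k.+1]addn1 -jE.
  rewrite Wk1_0 [W k 0]W_init ?k_gt0 // mulmx0 mul1mx trmx1 sub0r.
  move=> gapE; apply: (expanding_gram_addI (N := W k.+1 t)).
  by rewrite -[1%:M]opprK -gapE opprB addrC subrK.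
- have k1L : (k.+1 < L)%N by rewrite jE addnS ltnS -addSnnS leq_addr.
  rewrite !W_init ?k_gt0 ?k1L ?(ltnW k1L) // trmx1 mulmx1 subrr => /eqP.
  rewrite subr_eq0 => /eqP gapE.
  by apply: expanding_gram_eq (esym gapE) _; apply: IHj; rewrite ?addSnnS.
Qed.

Lemma expanding_trWprod n t : (n < L)%N -> 0 <= t -> expanding (Wprod (Wt t) n 1)^T.
Proof.
move=> + t_ge0; elim: n => [|n IHn] nL.
  by rewrite Wprod_nil // trmx1; exact: expanding1.
rewrite Wprod_recl // trmx_mul; apply: expanding_mul; first exact/IHn/ltnW.
exact: expanding_trW.
Qed.

Local Notation residual t := (Wprod (Wt t) L 1 - Phi).
Local Notation grad_sqnorm t :=
  (\sum_(l < L) mxdot (grad L Phi (Wt t) l.+1) (grad L Phi (Wt t) l.+1)).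

Lemma loss_is_derive (t : R) : 0 < t ->
  is_derive t 1 (fun s => loss L Phi (Wt s)) (- grad_sqnorm t).
Proof.
move=> t_gt0.
pose dE :=
  \sum_(l < L) Wprod (Wt t) L l.+2 *m grad L Phi (Wt t) l.+1 *m Wprod (Wt t) l 1.
have residual' : is_mxderive t (fun s => residual s) (- dE).
  have := is_mxderiveD (is_mxderive_Wprod (fun l lL => W_is_mxderive lL t_gt0))
    (is_mxderiveN (is_mxderive_cst t Phi)).
  by rewrite oppr0 addr0 /dE -sumrN; under eq_bigr do rewrite mulmxN mulNmx.
under eq_fun do rewrite loss_mxdot.
have := is_deriveZ (2^-1) (is_derive_mxdot residual' residual').
move/is_derive_eq; apply.
rewrite [mxdot (- dE) _]mxdotC mxdotNr mxdot_residual_grad.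
rewrite -opprD -mulr2n scalerN -[_ *: _]/(_ * _) -[X in _ * X]mulr_natl.
by rewrite mulKf ?pnatr_eq0.
Qed.

Lemma loss_le_grad_sqnorm (t : R) : 0 <= t ->
  2 * loss L Phi (Wt t) <= grad_sqnorm t.
Proof.
move=> t_ge0; rewrite loss_mxdot mulrA mulfV ?pnatr_eq0 // mul1r.
have lastL : (L.-1 < L)%N by rewrite ltn_predL.
rewrite (bigD1 (Ordinal lastL)) //= prednK // grad_last //.
apply: le_trans (mxdot_expanding _ (expanding_trWprod lastL t_ge0)) _.
by rewrite lerDl; apply: sumr_ge0 => l _; exact: mxdot_ge0.
Qed.

Lemma loss_right_cont0 : loss L Phi (Wt x) @[x --> 0^'+] --> loss L Phi (Wt 0).
Proof.
under eq_fun do rewrite loss_mxdot; rewrite loss_mxdot.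
have residual_cont0 : mx_right_cont0 (fun s => residual s).
  exact: mx_right_cont0D (mx_right_cont0_Wprod W_cont0)
    (mx_right_cont0N (mx_right_cont0_cst (C := Phi))).
by apply: cvgM; [exact: cvg_cst | exact: mxdot_right_cont0].
Qed.

End ZeroAsymmetricFlow.

Theorem theorem1 (R : realType) (d L : nat) (Phi : 'M[R]_d)
  (W : nat -> R -> 'M[R]_d) :
  (0 < d)%N -> (0 < L)%N ->
  (* zero-asymmetric initialization *)
  (forall l, (1 <= l < L)%N -> W l 0 = 1%:M) ->
  W L 0 = 0 ->
  (* gradient flow for t > 0, entrywise *)
  (forall l, (1 <= l <= L)%N -> forall t : R, 0 < t -> forall i j : 'I_d,
     is_derive t 1 (fun s => W l s i j) (- grad L Phi (fun k => W k t) l i j)) ->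
  (* right-continuity at t = 0 *)
  (forall l, (1 <= l <= L)%N -> forall i j : 'I_d,
     W l x i j @[x --> 0^'+] --> W l 0 i j) ->
  forall t : R, 0 <= t ->
    loss L Phi (fun k => W k t) <= expR (- 2 * t) * loss L Phi (fun k => W k 0).
Proof.
move=> _ L_gt0 W_init WL_init W_flow W_cont0.
apply: (exp_decay_of_derive (loss_is_derive W_flow)).
- move=> t t_gt0; rewrite mulNr lerN2.
  exact: loss_le_grad_sqnorm L_gt0 W_init WL_init W_flow W_cont0 _ (ltW t_gt0).
- exact: loss_right_cont0 W_cont0.
Qed.
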